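(* Let $n\geq 3$ and let $K_n$ be the complete graph on $n$ vertices. Then $\lim_{p\to\infty}\|M_{K_n}\|_p^p$ exists and $$\lim_{p\to\infty}\|M_{K_n}\|_p^p=\sup_{\alpha>1,\ k\in\{1,\dots,n\}}\frac{k\alpha^{n/k}+\alpha(n-k)}{k\alpha^{n/k}+n-k}.$$
   Context: For a finite connected graph $G=(V,E)$ with graph distance $d_G$ and $f:V\to\mathbb{R}$, $M_Gf(v)=\sup_{r\geq 0}\frac{1}{|B(v,r)|}\sum_{u\in B(v,r)}|f(u)|$, where $B(v,r)=\{u\in V: d_G(u,v)\le r\}$. For $g:V\to\mathbb{R}$, $\|g\|_p=(\sum_{v\in V}|g(v)|^p)^{1/p}$ and $\|M_G\|_p=\sup_{f\neq 0}\|M_Gf\|_p/\|f\|_p$. *)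

From HB Require Import structures.
From mathcomp Require Import all_boot all_order all_algebra.
From mathcomp Require Import all_classical all_reals all_analysis.
Set Implicit Arguments. Unset Strict Implicit. Unset Printing Implicit Defensive.
Import Order.TTheory GRing.Theory Num.Theory.
Local Open Scope classical_set_scope.
Local Open Scope ring_scope.

(* A finite graph is given by an edge relation [e : rel T] on a finType T.
   [walk_within e k u v] : there is a walk of length at most k from u to v,
   i.e. d_G(u,v) <= k for the graph distance d_G. *)
Fixpoint walk_within (T : finType) (e : rel T) (k : nat) (u v : T) : bool :=
  match k with
  | 0 => u == v
  | k'.+1 => walk_within e k' u v || [exists w, walk_within e k' u w && e w v]
  end.

Definition ball_G (R : realType) (T : finType) (e : rel T) (v : T) (r : R) : {set T} :=
  [set u | `[< exists k : nat, (k%:R <= r) /\ walk_within e k v u >]].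

Definition ball_avg (R : realType) (T : finType) (e : rel T) (f : T -> R) (v : T) (r : R) : R :=
  (#|ball_G e v r|%:R)^-1 * \sum_(u in ball_G e v r) `|f u|.

Definition maxop (R : realType) (T : finType) (e : rel T) (f : T -> R) (v : T) : R :=
  sup [set ball_avg e f v r | r in [set r : R | 0 <= r]].

Definition lpnorm (R : realType) (T : finType) (p : R) (g : T -> R) : R :=
  (\sum_(v : T) `|g v| `^ p) `^ p^-1.

Definition maxop_norm (R : realType) (T : finType) (e : rel T) (p : R) : R :=
  sup [set lpnorm p (maxop e f) / lpnorm p f | f in [set f : T -> R | f <> (fun _ => 0)]].

Definition complete_rel (n : nat) : rel 'I_n := fun x y => x != y.
Arguments complete_rel n : clear implicits.

From HB Require Import structures.
From mathcomp Require Import all_boot all_order all_algebra.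
From mathcomp Require Import all_classical all_reals all_analysis.
From mathcomp Require Import ring lra.
Import Order.TTheory GRing.Theory Num.Theory numFieldNormedType.Exports.
Local Open Scope classical_set_scope.
Local Open Scope ring_scope.
Set Implicit Arguments. Unset Strict Implicit. Unset Printing Implicit Defensive.

(* On K_n the maximal function is M f (v) = max (|f v|, mean |f|), so ||M||_p^p is the supremum
   of sum_v max (|f v|, mean |f|)^p / sum_v |f v|^p over f <> 0.  A function equal to m on k
   vertices and to b = alpha^(-1/p) on the n - k others, normalised to mean 1, has ratio at
   least the (k, alpha) term of the limit, for every p.  Conversely the power-mean inequality,
   applied separately above and below the mean, bounds the ratio of any f by that of such a
   two-level function.  For large p its levels are either far apart, and then m^p dominates
   and the ratio is close to 1, or close together, and then the ratio is within a factor
   1 + o(1) of the (k, alpha) term with alpha = b^(-p). *)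

Lemma powR_divr (R : realType) (a b p : R) : 0 <= a -> 0 < b ->
  (a / b) `^ p = a `^ p / b `^ p.
Proof.
move=> a0 b0; have bp_neq0 : b `^ p != 0 by rewrite lt0r_neq0 ?powR_gt0.
apply: (canRL (mulfK bp_neq0)).
by rewrite -powRM ?divfK ?(lt0r_neq0 b0) ?divr_ge0 ?(ltW b0).
Qed.

Section MaximalOperatorNorm.
Variables (R : realType) (T : finType) (e : rel T).

Lemma lpnorm_powR (p : R) (g : T -> R) : 0 < p ->
  lpnorm p g `^ p = \sum_v `|g v| `^ p.
Proof.
move=> p0; rewrite /lpnorm -powRrM mulVf ?gt_eqF // powRr1 //.
by apply: sumr_ge0 => v _; exact: powR_ge0.
Qed.

Lemma sum_powR_norm_gt0 (p : R) (f : T -> R) :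
  f <> (fun _ => 0) -> 0 < \sum_v `|f v| `^ p.
Proof.
move=> f_neq0; have [v fv0] : exists v, f v != 0.
  apply: contra_notP f_neq0 => f0; apply: funext => v.
  by apply/eqP/negPn/negP => fv0; apply: f0; exists v.
rewrite (bigD1 v) //= ltr_pwDl ?powR_gt0 ?normr_gt0 //.
by apply: sumr_ge0 => u _; exact: powR_ge0.
Qed.

Lemma powR_lpnorm_ratio (p : R) (f g : T -> R) : 0 < p -> f <> (fun _ => 0) ->
  (lpnorm p g / lpnorm p f) `^ p = (\sum_v `|g v| `^ p) / \sum_v `|f v| `^ p.
Proof.
move=> p0 f_neq0; rewrite powR_divr ?powR_ge0 //; last first.
  by apply: powR_gt0; exact: sum_powR_norm_gt0.
by congr (_ / _); exact: lpnorm_powR.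
Qed.

Variables (p c : R) (t0 : T).
Hypotheses (p_gt0 : 0 < p)
  (maxop_le : forall f : T -> R, f <> (fun _ => 0) ->
     \sum_v `|maxop e f v| `^ p <= c * \sum_v `|f v| `^ p).

Let ratios := [set lpnorm p (maxop e f) / lpnorm p f |
  f in [set f : T -> R | f <> (fun _ => 0)]].

Let ratio_ge0 x : ratios x -> 0 <= x.
Proof. by move=> [f _ <-]; apply: divr_ge0; exact: powR_ge0. Qed.

Let powR_ratio_le x : ratios x -> x `^ p <= c.
Proof.
move=> [f f_neq0 <-]; rewrite powR_lpnorm_ratio // ler_pdivrMr //.
  exact: maxop_le.
exact: sum_powR_norm_gt0.
Qed.

Let one_neq0 : (fun _ : T => 1 : R) <> (fun _ => 0).
Proof. by move/(congr1 (fun g => g t0))/eqP; rewrite oner_eq0. Qed.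

Let ratio1 : ratios (lpnorm p (maxop e (fun _ : T => 1 : R)) / lpnorm p (fun _ : T => 1 : R)).
Proof. by exists (fun _ : T => 1 : R). Qed.

Let c_ge0 : 0 <= c.
Proof. exact: le_trans (powR_ge0 _ _) (powR_ratio_le ratio1). Qed.

Let ratio_le x : ratios x -> x <= c `^ p^-1.
Proof.
move=> rx; rewrite -[x](@powRr1 _ _ (ratio_ge0 rx)) -(mulfV (lt0r_neq0 p_gt0)).
rewrite powRrM; apply: ge0_ler_powR; rewrite ?invr_ge0 ?nnegrE ?powR_ge0 //.
- exact: ltW.
- exact: powR_ratio_le.
Qed.

Let has_sup_ratios : has_sup ratios.
Proof. by split; [eexists; exact: ratio1 | exists (c `^ p^-1) => x /ratio_le]. Qed.

Let maxop_norm_ge0 : 0 <= maxop_norm e p.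
Proof. exact: le_trans (ratio_ge0 ratio1) (sup_upper_bound has_sup_ratios ratio1). Qed.

Lemma powR_maxop_norm_le : maxop_norm e p `^ p <= c.
Proof.
have norm_le : maxop_norm e p <= c `^ p^-1.
  by apply: ge_sup; [eexists; exact: ratio1 | exact: ratio_le].
rewrite -[c](@powRr1 _ _ c_ge0) -(mulVf (lt0r_neq0 p_gt0)) powRrM.
by apply: ge0_ler_powR; rewrite ?nnegrE ?powR_ge0 ?(ltW p_gt0).
Qed.

Lemma ler_maxop_norm_powR (f : T -> R) : f <> (fun _ => 0) ->
  \sum_v `|maxop e f v| `^ p <= maxop_norm e p `^ p * \sum_v `|f v| `^ p.
Proof.
move=> f_neq0; rewrite -ler_pdivrMr ?sum_powR_norm_gt0 // -powR_lpnorm_ratio //.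
have ratio_f : ratios (lpnorm p (maxop e f) / lpnorm p f) by exists f.
apply: ge0_ler_powR; rewrite ?nnegrE ?(ltW p_gt0) ?(ratio_ge0 ratio_f) //.
exact: sup_upper_bound.
Qed.

End MaximalOperatorNorm.

Section CompleteGraph.
Variables (R : realType) (n : nat).

Lemma walk_within_complete k (u v : 'I_n) :
  walk_within (complete_rel n) k.+1 u v.
Proof.
elim: k => [|k IHk]; last by apply/orP; left.
have [->|uv] := eqVneq u v; first by rewrite /= eqxx.
by apply/orP; right; apply/existsP; exists u; rewrite eqxx /complete_rel uv.
Qed.

Lemma ball_complete (v : 'I_n) (r : R) : 0 <= r ->
  ball_G (complete_rel n) v r = (if r < 1 then [set v] else [set: 'I_n])%SET.
Proof.
move=> r_ge0; apply/setP => u; rewrite inE; case: ifPn => [r_lt1|].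
- rewrite inE; apply/asboolP/eqP => [[[|k] [kr walk_vu]]|->].
  + by move/eqP: walk_vu.
  + by move: r_lt1; rewrite ltNge (le_trans _ kr) // ler1n.
  + by exists 0%N; split => //=.
- by rewrite -leNgt inE => r_ge1; apply/asboolP; exists 1%N; rewrite walk_within_complete.
Qed.

Lemma maxop_complete (f : 'I_n -> R) v :
  maxop (complete_rel n) f v = Num.max `|f v| ((\sum_u `|f u|) / n%:R).
Proof.
have avg_small : ball_avg (complete_rel n) f v 0 = `|f v|.
  by rewrite /ball_avg ball_complete // ltr01 cards1 big_set1 invr1 mul1r.
have avg_large r : 1 <= r -> ball_avg (complete_rel n) f v r = (\sum_u `|f u|) / n%:R.
  move=> r_ge1; rewrite /ball_avg ball_complete ?(le_trans ler01) // ltNge r_ge1.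
  by rewrite cardsT card_ord mulrC; congr (_ / _); apply: eq_bigl => u; rewrite inE.
rewrite /maxop; set E := [set _ | _ in _].
have E_small : E `|f v| by exists 0; rewrite /= ?lexx ?avg_small.
have E_large : E ((\sum_u `|f u|) / n%:R) by exists 1; rewrite /= ?ler01 // avg_large.
have E_ub : ubound E (Num.max `|f v| ((\sum_u `|f u|) / n%:R)).
  move=> _ [r /= r_ge0 <-]; have [r_lt1|r_ge1] := ltP r 1.
    by rewrite /ball_avg ball_complete // r_lt1 cards1 big_set1 invr1 mul1r le_max lexx.
  by rewrite avg_large // le_max lexx orbT.
apply/le_anti; rewrite ge_sup /=; [|by exists `|f v| | by []].
have E_sup : has_sup E by split; [exists `|f v| | eexists; exact: E_ub].
by rewrite ge_max !sup_upper_bound.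
Qed.

End CompleteGraph.

Section RealInequalities.
Variable R : realType.

Lemma ln_le_subr1 (x : R) : 0 < x -> ln x <= x - 1.
Proof.
by move=> x_gt0; have := @le_ln1Dx _ (x - 1); rewrite subrKC; apply; lra.
Qed.

Lemma onem_inv_le_ln (x : R) : 0 < x -> 1 - x^-1 <= ln x.
Proof.
move=> x_gt0; have := @ln_le_subr1 x^-1.
by rewrite invr_gt0 lnV ?posrE // => /(_ x_gt0); lra.
Qed.

Lemma half_le_ln1Dx (x : R) : 0 <= x <= 1 -> x / 2 <= ln (1 + x).
Proof.
case/andP=> x_ge0 x_le1; apply: le_trans (onem_inv_le_ln _); last lra.
have -> : 1 - (1 + x)^-1 = x / (1 + x) by field; lra.
by apply: ler_wpM2l => //; rewrite lef_pV2 ?posrE; lra.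
Qed.

Lemma bernoulli_powR (z p : R) : 0 <= z -> 1 <= p -> 1 + p * (z - 1) <= z `^ p.
Proof.
move=> z_ge0 p_ge1; have [->|p_neq1] := eqVneq p 1.
  by rewrite powRr1 // mul1r addrC subrK.
have p_gt1 : 1 < p by rewrite lt_neqAle eq_sym p_neq1.
pose q := p / (p - 1).
have q_gt0 : 0 < q by rewrite divr_gt0 // ?subr_gt0; lra.
have pq : p^-1 + q^-1 = 1 by rewrite /q invf_div; field; lra.
have := conjugate_powR z_ge0 ler01 (lt_trans ltr01 p_gt1) q_gt0 pq.
rewrite mulr1 powR1 /q invf_div mul1r -mulrDl ler_pdivlMr; lra.
Qed.

Lemma powR_le1 (x p : R) : 0 <= x <= 1 -> 0 <= p -> x `^ p <= 1.
Proof.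
case/andP=> x_ge0 x_le1 p_ge0; have := @ge0_ler_powR _ p p_ge0 x 1.
by rewrite powR1; apply; rewrite ?nnegrE.
Qed.

Lemma sum_powR_ge_mean (I : finType) (A : {set I}) (t : I -> R) (p : R) :
  1 <= p -> (forall i, 0 <= t i) ->
  #|A|%:R * ((\sum_(i in A) t i) / #|A|%:R) `^ p <= \sum_(i in A) t i `^ p.
Proof.
move=> p_ge1 t_ge0; set k := #|A|%:R; set mu := _ / k.
have sum_ge0 : 0 <= \sum_(i in A) t i `^ p by apply: sumr_ge0 => i _; exact: powR_ge0.
have [mu_eq0|mu_neq0] := eqVneq mu 0.
  by rewrite mu_eq0 powR0 ?mulr0 // gt_eqF //; lra.
have k_neq0 : k != 0 by apply: contraNneq mu_neq0 => k0; rewrite /mu k0 invr0 mulr0.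
have mu_gt0 : 0 < mu.
  rewrite lt0r mu_neq0 divr_ge0 ?ler0n //; exact: sumr_ge0.
have tangent i : mu `^ p * (1 + p * (t i / mu - 1)) <= t i `^ p.
  have -> : t i `^ p = mu `^ p * (t i / mu) `^ p.
    rewrite -powRM; [|exact: ltW|by rewrite divr_ge0 // ltW].
    by rewrite mulrC divfK // lt0r_neq0.
  apply: ler_wpM2l; first exact: powR_ge0.
  by apply: bernoulli_powR; rewrite // divr_ge0 ?(ltW mu_gt0).
have sum_tangent : \sum_(i in A) (1 + p * (t i / mu - 1)) = k.
  have sum_neq0 : \sum_(i in A) t i != 0.
    by apply: contraNneq mu_neq0; rewrite /mu => ->; rewrite mul0r.
  rewrite big_split /= sumr_const -mulr_sumr big_split /= sumr_const -mulr_suml.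
  have -> : (\sum_(i in A) t i) * mu^-1 = k by rewrite /mu invf_div mulrCA mulfV ?mulr1.
  by rewrite mulNrn subrr mulr0 addr0.
apply: le_trans (ler_sum _ (fun i _ => tangent i)).
by rewrite -mulr_sumr sum_tangent mulrC.
Qed.

End RealInequalities.

(* For the function equal to m on k vertices and to b on d vertices, with mean 1, the ratio
   sum |M f|^p / sum |f|^p is level_ratio k d a (a * m^p) with a = b^(-p) (level_ratio_mul);
   the (k, alpha) term of the limit is level_ratio k (n - k) alpha (alpha^(n/k)). *)
Definition level_ratio (R : realType) (k d a t : R) : R :=
  (k * t + a * d) / (k * t + d).

Section LevelRatio.
Variables (R : realType) (k d : R).

Let den_gt0 (t : R) : 0 < k -> 0 <= d -> 0 < t -> 0 < k * t + d.
Proof. by move=> k_gt0 d_ge0 t_gt0; apply: ltr_wpDr => //; exact: mulr_gt0. Qed.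

Lemma level_ratio1 (t : R) : 0 < k -> 0 <= d -> 0 < t -> level_ratio k d 1 t = 1.
Proof. by move=> k_gt0 d_ge0 t_gt0; rewrite /level_ratio mul1r divff // gt_eqF ?den_gt0. Qed.

Lemma level_ratio_le (a t : R) : 0 < k -> 0 <= d -> 0 < a <= t ->
  level_ratio k d a t <= 1 + d / k.
Proof.
move=> k_gt0 d_ge0 /andP[a_gt0 a_le_t]; have t_gt0 := lt_le_trans a_gt0 a_le_t.
rewrite /level_ratio ler_pdivrMr ?den_gt0 //.
have -> : (1 + d / k) * (k * t + d) = k * t + d * t + d + d / k * d.
  by field; rewrite gt_eqF.
have : a * d <= d * t by rewrite mulrC ler_wpM2l.
have : 0 <= d / k * d by rewrite !mulr_ge0 ?invr_ge0 // ltW.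
lra.
Qed.

Lemma level_ratio_antitone (a t t' : R) : 0 < k -> 0 <= d -> 1 <= a -> 0 < t -> t <= t' ->
  level_ratio k d a t' <= level_ratio k d a t.
Proof.
move=> k_gt0 d_ge0 a_ge1 t_gt0 t_le; have t'_gt0 := lt_le_trans t_gt0 t_le.
rewrite /level_ratio ler_pdivrMr ?den_gt0 // mulrAC ler_pdivlMr ?den_gt0 //.
have : 0 <= k * d * (a - 1) * (t' - t) by rewrite !mulr_ge0 ?subr_ge0 // ltW.
nra.
Qed.

Lemma level_ratio_le_mulr (a e t T : R) : 0 < k -> 0 <= d -> 1 <= a -> 0 <= e ->
  0 < t -> 0 < T -> T <= (1 + e) * t ->
  level_ratio k d a t <= (1 + e) * level_ratio k d a T.
Proof.
move=> k_gt0 d_ge0 a_ge1 e_ge0 t_gt0 T_gt0 T_le; set s := 1 + e.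
have s_ge1 : 1 <= s by rewrite /s lerDl.
have st_gt0 : 0 < s * t by apply: mulr_gt0 => //; lra.
apply: le_trans (ler_wpM2l (ltW (lt_le_trans ltr01 s_ge1))
  (level_ratio_antitone k_gt0 d_ge0 a_ge1 T_gt0 T_le)).
rewrite /level_ratio [s * (_ / _)]mulrA ler_pdivrMr ?den_gt0 // mulrAC.
rewrite ler_pdivlMr ?den_gt0 // -subr_ge0.
have -> : s * (k * (s * t) + a * d) * (k * t + d) - (k * t + a * d) * (k * (s * t) + d)
    = (s - 1) * (s * k ^+ 2 * t ^+ 2 + (s + 1) * k * t * d + a * d ^+ 2) by ring.
by rewrite mulr_ge0 ?subr_ge0 // !addr_ge0 ?mulr_ge0 ?sqr_ge0 ?(ltW k_gt0) ?(ltW t_gt0) //; lra.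
Qed.

Lemma level_ratio_mul (a c t : R) : a * c = 1 ->
  level_ratio k d a (a * t) = (k * t + d) / (k * t + d * c).
Proof.
move=> ac1; have a_neq0 : a != 0.
  by apply: contra_eq_neq ac1 => ->; rewrite mul0r eq_sym oner_eq0.
rewrite /level_ratio (_ : k * (a * t) + a * d = a * (k * t + d)); last by ring.
rewrite (_ : k * (a * t) + d = a * (k * t + d * c)); last first.
  by rewrite mulrDr [a * (d * c)]mulrCA ac1 mulr1; ring.
by rewrite invfM mulrACA mulfV // mul1r.
Qed.

End LevelRatio.

Section TwoLevelBounds.
Variable R : realType.

Lemma ln_level_gap (k d h m : R) : 1 <= k -> 0 <= d -> 0 <= h <= 1/2 ->
  k * (m - 1) = d * h -> d / k * (- ln (1 - h)) - ln m <= 2 * (k + d) ^+ 2 * h ^+ 2.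
Proof.
move=> k_ge1 d_ge0 /andP[h_ge0 h_le] km.
have k_gt0 : 0 < k by lra.
have m_ge1 : 1 <= m.
  have : 0 <= k * (m - 1) by rewrite km mulr_ge0.
  by rewrite pmulr_rge0 // subr_ge0.
have m_gt0 : 0 < m by lra.
have b_gt0 : 0 < 1 - h by lra.
have ln_b : - ln (1 - h) <= h / (1 - h).
  have := onem_inv_le_ln b_gt0.
  have -> : h / (1 - h) = (1 - h)^-1 - 1 by field; rewrite gt_eqF.
  lra.
have ln_m : d * h / (k * m) <= ln m.
  have := onem_inv_le_ln m_gt0.
  have -> : d * h / (k * m) = 1 - m^-1 by rewrite -km; field; rewrite ?gt_eqF.
  lra.
have dk_ge0 : 0 <= d / k by rewrite divr_ge0 // ltW.
apply: (@le_trans _ _ (d / k * (h / (1 - h)) - d * h / (k * m))).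
  by apply: lerB => //; exact: ler_wpM2l.
have -> : d / k * (h / (1 - h)) - d * h / (k * m) =
    d * h * (m - 1 + h) / (k * (1 - h) * m) by field; rewrite ?gt_eqF.
rewrite ler_pdivrMr ?mulr_gt0 //.
have W_le : m - 1 + h <= (k + d) * h.
  have : k * (m - 1 + h) = (k + d) * h by rewrite mulrDr km; ring.
  have : 0 <= m - 1 + h by lra.
  nra.
have den_ge : 1 <= 2 * (k * (1 - h) * m).
  have : 1/2 <= k * (1 - h) by nra.
  have : k * (1 - h) <= k * (1 - h) * m by rewrite ler_peMr // mulr_ge0; lra.
  lra.
apply: (@le_trans _ _ ((k + d) ^+ 2 * h ^+ 2)).
  rewrite (_ : _ ^+ 2 * _ ^+ 2 = (k + d) * h * ((k + d) * h)); last by ring.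
  apply: ler_pM => //; first by rewrite mulr_ge0.
  - lra.
  - by apply: ler_wpM2r => //; lra.
rewrite (_ : 2 * _ * _ * _ = (k + d) ^+ 2 * h ^+ 2 * (2 * (k * (1 - h) * m))); last by ring.
by rewrite ler_peMr // mulr_ge0 // sqr_ge0.
Qed.

Lemma two_level_spread (k d m b p e : R) : 0 < k -> 0 <= d -> 1 <= m -> 0 <= b ->
  k * m + d * b = k + d -> 1 <= p -> 0 <= e -> 1 <= p * (1 - b) * e ->
  k * m `^ p + d <= (1 + e) * (k * m `^ p + d * b `^ p).
Proof.
move=> k_gt0 d_ge0 m_ge1 b_ge0 km p_ge1 e_ge0 spread.
have bern := bernoulli_powR (le_trans ler01 m_ge1) p_ge1.
have d_le : d <= e * (k * m `^ p).
  have : d <= d * (p * (1 - b) * e) by rewrite ler_peMr.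
  have -> : d * (p * (1 - b) * e) = e * (k * (p * (m - 1))).
    have km' : d * (1 - b) = k * (m - 1) by lra.
    by transitivity (e * p * (d * (1 - b))); [ring | rewrite km'; ring].
  have : k * (p * (m - 1)) <= k * m `^ p by rewrite ler_wpM2l ?(ltW k_gt0) //; lra.
  move=> /(ler_wpM2l e_ge0); lra.
have : 0 <= (1 + e) * (d * b `^ p) by rewrite !mulr_ge0 ?powR_ge0 //; lra.
lra.
Qed.

Lemma exponent_large (N S e p : R) : 1 <= N -> 1 <= S -> 0 < e <= 1 ->
  4 * N ^+ 2 * S <= p * e ^+ 3 -> 4 <= p * e <= p.
Proof.
move=> N_ge1 S_ge1 /andP[e_gt0 e_le1] p_large.
have NS_ge1 : 1 <= N ^+ 2 * S by rewrite -[1]mulr1 ler_pM // exprn_ege1.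
have p_gt0 : 0 < p.
  have : 0 < p * e ^+ 3 by lra.
  by rewrite pmulr_lgt0 // exprn_gt0.
have e3_le : e ^+ 3 <= e by rewrite exprS ler_piMr ?(ltW e_gt0) // exprn_ile1 // ltW.
have : p * e ^+ 3 <= p * e by rewrite ler_wpM2l // ltW.
by rewrite ler_piMr ?(ltW p_gt0) // andbT; lra.
Qed.

Lemma exponent_gap_le_ln1D (N S e p h : R) : 1 <= S -> 0 < e <= 1 -> 0 < p ->
  4 * N ^+ 2 * S <= p * e ^+ 3 -> 0 <= h -> p * h * e < 1 ->
  p * (2 * N ^+ 2 * h ^+ 2) <= ln (1 + e / S).
Proof.
move=> S_ge1 /andP[e_gt0 e_le1] p_gt0 p_large h_ge0 phe_lt1.
apply: le_trans (half_le_ln1Dx _); last by rewrite divr_ge0 ?ler_pdivrMr; lra.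
have phe_ge0 := mulr_ge0 (mulr_ge0 (ltW p_gt0) h_ge0) (ltW e_gt0).
have : (p * h * e) ^+ 2 * e <= e by rewrite ler_piMl ?(ltW e_gt0) // exprn_ile1 // ltW.
have := ler_wpM2l (mulr_ge0 (ltW p_gt0) (sqr_ge0 h)) p_large.
have -> : p * h ^+ 2 * (p * e ^+ 3) = (p * h * e) ^+ 2 * e by ring.
rewrite ler_pdivlMr // ler_pdivlMr; lra.
Qed.

Lemma powR_inv_gap_le (k d N m b p c : R) : 0 < k -> N = k + d ->
  0 < b -> 0 < m -> 0 < p -> 0 <= c ->
  p * (d / k * (- ln b) - ln m) <= ln (1 + c) ->
  (b `^ p)^-1 `^ (N / k) <= (1 + c) * ((b `^ p)^-1 * m `^ p).
Proof.
move=> k_gt0 N_eq b_gt0 m_gt0 p_gt0 c_ge0 gap.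
have a_pos : (b `^ p)^-1 \is Num.pos by rewrite posrE invr_gt0 powR_gt0.
have mp_pos : m `^ p \is Num.pos by rewrite posrE powR_gt0.
have c1_pos : 1 + c \is Num.pos by rewrite posrE; lra.
have amp_pos : (b `^ p)^-1 * m `^ p \is Num.pos by rewrite posrE mulr_gt0.
rewrite -ler_ln ?posrE ?powR_gt0 ?mulr_gt0 //.
rewrite ln_powR !lnM // lnV ?posrE ?powR_gt0 // !ln_powR.
have -> : N / k * - (p * ln b) = - (p * ln b) + p * (d / k * - ln b).
  by rewrite N_eq; field; rewrite gt_eqF.
lra.
Qed.

Lemma two_level_le_of_gap (k d N m b p c S : R) :
  0 < k -> 0 <= d -> N = k + d -> 1 <= S ->
  (forall a, 1 < a -> level_ratio k d a (a `^ (N / k)) <= S) ->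
  0 < b <= 1 -> 1 <= m -> 0 < p -> 0 <= c ->
  p * (d / k * (- ln b) - ln m) <= ln (1 + c) ->
  k * m `^ p + d <= (1 + c) * S * (k * m `^ p + d * b `^ p).
Proof.
move=> k_gt0 d_ge0 N_eq S_ge1 ratio_le b01 m_ge1 p_gt0 c_ge0 gap.
have /andP[b_gt0 b_le1] := b01.
pose a := (b `^ p)^-1.
have bp_gt0 : 0 < b `^ p by rewrite powR_gt0.
have a_ge1 : 1 <= a.
  by rewrite invf_ge1 //; apply: powR_le1 (ltW p_gt0); rewrite ltW.
have a_bp : a * b `^ p = 1 by rewrite mulVf // gt_eqF.
have ratio_T : level_ratio k d a (a `^ (N / k)) <= S.
  have [->|a_neq1] := eqVneq a 1; first by rewrite powR1 level_ratio1.
  by apply: ratio_le; rewrite lt_neqAle eq_sym a_neq1.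
have a_gt0 : 0 < a by lra.
have m_gt0 : 0 < m by lra.
have := level_ratio_le_mulr k_gt0 d_ge0 a_ge1 c_ge0 (mulr_gt0 a_gt0 (powR_gt0 _ m_gt0))
  (powR_gt0 _ a_gt0) (powR_inv_gap_le k_gt0 N_eq b_gt0 m_gt0 p_gt0 c_ge0 gap).
rewrite (level_ratio_mul _ _ _ a_bp) => ratio_t.
have den_gt0 : 0 < k * m `^ p + d * b `^ p.
  by rewrite ltr_pwDl ?mulr_ge0 ?powR_ge0 // mulr_gt0 // powR_gt0.
rewrite -ler_pdivrMr //; apply: le_trans ratio_t _.
by rewrite ler_wpM2l //; lra.
Qed.

Lemma two_level_le (k d N m b p e S : R) :
  1 <= k -> 0 <= d -> N = k + d -> 1 <= S ->
  (forall a, 1 < a -> level_ratio k d a (a `^ (N / k)) <= S) ->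
  0 < e <= 1 -> 4 * N ^+ 2 * S <= p * e ^+ 3 ->
  1 <= m -> 0 <= b <= 1 -> k * m + d * b = N ->
  k * m `^ p + d <= (S + e) * (k * m `^ p + d * b `^ p).
Proof.
move=> k_ge1 d_ge0 N_eq S_ge1 ratio_le e01 p_large m_ge1 /andP[b_ge0 b_le1] km.
have k_gt0 : 0 < k by lra.
have N_ge1 : 1 <= N by lra.
case/andP: (e01) => e_gt0 e_le1.
case/andP: (exponent_large N_ge1 S_ge1 e01 p_large) => pe_ge4 pe_le.
have p_gt0 : 0 < p by lra.
have [spread|flat] := leP 1 (p * (1 - b) * e).
  apply: le_trans (two_level_spread k_gt0 d_ge0 m_ge1 b_ge0 _ _ (ltW e_gt0) spread) _.
  - by rewrite -N_eq.
  - lra.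
  apply: ler_wpM2r; last lra.
  exact: addr_ge0 (mulr_ge0 (ltW k_gt0) (powR_ge0 _ _)) (mulr_ge0 d_ge0 (powR_ge0 _ _)).
have h_ge0 : 0 <= 1 - b by rewrite subr_ge0.
have h_le : 1 - b <= 1/2 by nra.
have b01 : 0 < b <= 1 by rewrite b_le1 andbT; lra.
have gap : p * (d / k * (- ln b) - ln m) <= ln (1 + e / S).
  apply: le_trans (exponent_gap_le_ln1D S_ge1 e01 p_gt0 p_large h_ge0 flat).
  rewrite ler_wpM2l ?(ltW p_gt0) // N_eq -{1}(subKr 1 b).
  by apply: ln_level_gap; rewrite ?h_ge0 ?h_le //; lra.
have -> : S + e = (1 + e / S) * S by field; rewrite gt_eqF //; lra.
apply: (two_level_le_of_gap k_gt0 d_ge0 N_eq S_ge1 ratio_le b01 m_ge1 p_gt0 _ gap).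
exact: divr_ge0 (ltW e_gt0) (le_trans ler01 S_ge1).
Qed.

Lemma powR_two_level_le (k d a p : R) : 0 < k -> 0 <= d -> 1 <= a -> 0 < p ->
  a * (1 + d / k * (1 - a `^ (- p^-1))) `^ p <= a `^ ((k + d) / k).
Proof.
move=> k_gt0 d_ge0 a_ge1 p_gt0; set b := a `^ _; set m := 1 + _.
have a_gt0 : 0 < a by lra.
have b_gt0 : 0 < b by rewrite powR_gt0.
have b_le1 : b <= 1.
  by rewrite /b -(powRr0 a) ler_powR // oppr_le0 invr_ge0 ltW.
have dk_ge0 : 0 <= d / k by rewrite divr_ge0 // ltW.
have [k_neq0 p_neq0] : k != 0 /\ p != 0 by rewrite !gt_eqF.
have m_gt0 : 0 < m by rewrite /m ltr_pwDl // mulr_ge0 // subr_ge0.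
rewrite -ler_ln ?posrE ?mulr_gt0 ?powR_gt0 // lnM ?posrE ?powR_gt0 // !ln_powR.
have ln_b : - ln b = ln a / p by rewrite /b ln_powR mulNr opprK mulrC.
have lnm_le : p * ln m <= d / k * ln a.
  have b_le : 1 - b <= ln a / p by rewrite -ln_b; have := ln_le_subr1 b_gt0; lra.
  have := ler_wpM2l (ltW p_gt0) (ler_wpM2l dk_ge0 b_le).
  have -> : p * (d / k * (ln a / p)) = d / k * ln a by field; rewrite k_neq0 p_neq0.
  have := ler_wpM2l (ltW p_gt0) (ln_le_subr1 m_gt0).
  rewrite /m; lra.
have -> : (k + d) / k * ln a = ln a + d / k * ln a by field.
lra.
Qed.

End TwoLevelBounds.

Definition extremal_ratio (R : realType) (n k : nat) (a : R) : R :=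
  level_ratio k%:R (n - k)%:R a (a `^ (n%:R / k%:R)).

Definition extremal_set (R : realType) (n : nat) : set R :=
  [set x | exists (a : R) (k : nat), [/\ 1 < a, (1 <= k <= n)%N & x = extremal_ratio n k a]].

Section Reduction.
Variables (R : realType) (I : finType).

Lemma mediant_cross_le (X Y X0 Y0 c : R) : 0 <= X0 <= X -> 0 <= Y0 <= Y -> Y <= c ->
  (X + c) * (X0 + Y0) <= (X0 + c) * (X + Y).
Proof.
move=> /andP[X0_ge0 X0_le] /andP[Y0_ge0 Y0_le] Y_le; rewrite -subr_ge0.
have -> : (X0 + c) * (X + Y) - (X + c) * (X0 + Y0) =
  (c - Y0) * (X - X0) + (X0 + c) * (Y - Y0) by ring.
by apply: addr_ge0; apply: mulr_ge0; rewrite ?subr_ge0; lra.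
Qed.

Lemma mulr_card_mean (A : {set I}) (t : I -> R) :
  #|A|%:R * ((\sum_(i in A) t i) / #|A|%:R) = \sum_(i in A) t i.
Proof.
have [/eqP|A_neq0] := eqVneq #|A| 0%N; last by rewrite mulrC divfK // pnatr_eq0.
by rewrite cards_eq0 => /eqP ->; rewrite big_set0 mul0r mulr0.
Qed.

Lemma sum_setC_split (T : {set I}) (F : I -> R) :
  \sum_v F v = \sum_(v in T) F v + \sum_(v in ~: T) F v.
Proof.
by rewrite (bigID (mem T)) /=; congr (_ + _); apply: eq_bigl => v; rewrite inE.
Qed.

Lemma two_level_reduction (x : I -> R) (p : R) : (0 < #|I|)%N -> 1 <= p ->
  (forall v, 0 <= x v) -> \sum_v x v = #|I|%:R ->
  exists k (m b : R), [/\ (1 <= k <= #|I|)%N, 1 <= m, 0 <= b <= 1,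
    k%:R * m + (#|I| - k)%:R * b = #|I|%:R &
    (\sum_v Num.max (x v) 1 `^ p) * (k%:R * m `^ p + (#|I| - k)%:R * b `^ p) <=
    (k%:R * m `^ p + (#|I| - k)%:R) * \sum_v x v `^ p].
Proof.
move=> I_gt0 p_ge1 x_ge0 sum_x.
set T := [set v | 1 <= x v]%SET; set B := ~: T.
have inT v : (v \in T) = (1 <= x v) by rewrite inE.
have inB v : (v \in B) = (x v < 1) by rewrite inE inT ltNge.
have cardB : #|B| = (#|I| - #|T|)%N by rewrite -(cardsC T) addKn.
have T_gt0 : (0 < #|T|)%N.
  rewrite lt0n cards_eq0; apply/eqP => T0; have [v0 _] := card_gt0P I_gt0.
  have all_lt1 v : x v < 1 by rewrite -inB /B T0 finset.setC0 inE.
  suff : \sum_v x v < \sum_(v : I) 1 by rewrite sum_x sumr_const ltxx.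
  rewrite (bigD1 v0) //= [X in _ < X](bigD1 v0) //= ltr_leD //.
  by apply: ler_sum => v _; exact: ltW.
set m := (\sum_(v in T) x v) / #|T|%:R; set b := (\sum_(v in B) x v) / #|B|%:R.
exists #|T|, m, b; rewrite -cardB; split.
- by rewrite T_gt0 max_card.
- rewrite /m ler_pdivlMr ?ltr0n // mul1r -sumr_const.
  by apply: ler_sum => v; rewrite inT.
- have B_ge0 : 0 <= \sum_(v in B) x v by exact: sumr_ge0.
  have [B0|B_gt0] := posnP #|B|; first by rewrite /b B0 invr0 mulr0 lexx ler01.
  rewrite /b divr_ge0 //= ler_pdivrMr ?ltr0n // mul1r -sumr_const.
  by apply: ler_sum => v; rewrite inB => /ltW.
- by rewrite /m /b !mulr_card_mean -sum_setC_split.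
have max_split : \sum_v Num.max (x v) 1 `^ p = \sum_(v in T) x v `^ p + #|B|%:R.
  rewrite (sum_setC_split T) -/B -sumr_const; congr (_ + _); apply: eq_bigr => v.
    by rewrite inT => /max_l ->.
  by rewrite inB => /ltW/max_r ->; rewrite powR1.
rewrite max_split (sum_setC_split T (fun v => x v `^ p)) -/B.
apply: mediant_cross_le.
- by rewrite mulr_ge0 ?powR_ge0 // sum_powR_ge_mean.
- by rewrite mulr_ge0 ?powR_ge0 // sum_powR_ge_mean.
- rewrite -sumr_const; apply: ler_sum => v; rewrite inB => /ltW x_le1.
  by rewrite powR_le1 ?x_ge0 // (le_trans ler01 p_ge1).
Qed.

Lemma sum_max1_powR_le (x : I -> R) (p e S : R) :
  (0 < #|I|)%N -> 1 <= S ->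
  (forall k a, (1 <= k <= #|I|)%N -> 1 < a -> extremal_ratio #|I| k a <= S) ->
  0 < e <= 1 -> 4 * #|I|%:R ^+ 2 * S <= p * e ^+ 3 ->
  (forall v, 0 <= x v) -> \sum_v x v = #|I|%:R ->
  \sum_v Num.max (x v) 1 `^ p <= (S + e) * \sum_v x v `^ p.
Proof.
move=> I_gt0 S_ge1 ratio_le e01 p_large x_ge0 sum_x.
have N_ge1 : 1 <= #|I|%:R :> R by rewrite ler1n.
have p_ge1 : 1 <= p.
  by case/andP: (exponent_large N_ge1 S_ge1 e01 p_large) => pe_ge4 pe_le; lra.
have [k [m [b [k_range m_ge1 b01 mass reduced]]]] :=
  two_level_reduction I_gt0 p_ge1 x_ge0 sum_x.
have /andP[k_ge1 k_le] := k_range.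
have N_eq : #|I|%:R = k%:R + (#|I| - k)%:R :> R by rewrite -natrD subnKC.
have k_ge1R : 1 <= k%:R :> R by rewrite ler1n.
have bound := two_level_le k_ge1R (ler0n _ _) N_eq S_ge1
  (fun a => ratio_le k a k_range) e01 p_large m_ge1 b01 mass.
have den_gt0 : 0 < k%:R * m `^ p + (#|I| - k)%:R * b `^ p.
  by rewrite ltr_pwDl ?mulr_ge0 ?powR_ge0 // mulr_gt0 ?ltr0n // powR_gt0 //; lra.
rewrite -(ler_pM2r den_gt0); apply: le_trans reduced _; rewrite mulrAC.
by apply: ler_wpM2r bound; apply: sumr_ge0 => v _; exact: powR_ge0.
Qed.

End Reduction.

Section CompleteGraphNorm.
Variables (R : realType) (n : nat).

Lemma extremal_ratio_nn (a : R) : (0 < n)%N -> 0 < a -> extremal_ratio n n a = 1.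
Proof.
move=> n_gt0 a_gt0; have n_neq0 : n%:R != 0 :> R by rewrite pnatr_eq0 -lt0n.
have den_neq0 : n%:R * a `^ (n%:R / n%:R) != 0 by rewrite mulf_neq0 // gt_eqF // powR_gt0.
by rewrite /extremal_ratio /level_ratio subnn mulr0n mulr0 !addr0 divff.
Qed.

Lemma extremal_ratio_le k (a : R) : (1 <= k <= n)%N -> 1 <= a ->
  extremal_ratio n k a <= n%:R.
Proof.
move=> /andP[k_ge1 k_le] a_ge1; have k_ge1R : 1 <= k%:R :> R by rewrite ler1n.
have N_eq : n%:R = k%:R + (n - k)%:R :> R by rewrite -natrD subnKC.
have k_gt0 : 0 < k%:R :> R by lra.
have a_le : a <= a `^ (n%:R / k%:R).
  by rewrite le1r_powR // ler_pdivlMr // mul1r N_eq lerDl.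
apply: le_trans (level_ratio_le k_gt0 (ler0n _ _) _) _.
  by rewrite (lt_le_trans ltr01 a_ge1) a_le.
have : (n - k)%:R / k%:R <= (n - k)%:R :> R by rewrite ler_pdivrMr // ler_peMr.
lra.
Qed.

Lemma sum_maxop_complete_le (f : 'I_n -> R) (p e S : R) : 1 <= S ->
  (forall k a, (1 <= k <= n)%N -> 1 < a -> extremal_ratio n k a <= S) ->
  0 < e <= 1 -> 4 * n%:R ^+ 2 * S <= p * e ^+ 3 -> f <> (fun _ => 0) ->
  \sum_v `|maxop (complete_rel n) f v| `^ p <= (S + e) * \sum_v `|f v| `^ p.
Proof.
move=> S_ge1 ratio_le e01 p_large f_neq0.
have sum_gt0 : 0 < \sum_u `|f u|.
  rewrite (eq_bigr (fun u => `|f u| `^ 1)); first exact: sum_powR_norm_gt0.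
  by move=> u _; rewrite powRr1.
have n_gt0 : (0 < n)%N.
  case: (pickP (@predT 'I_n)) => [v _|no_v]; first exact: leq_ltn_trans (leq0n v) (ltn_ord v).
  by move: sum_gt0; rewrite big_pred0 ?ltxx.
set A := (\sum_u `|f u|) / n%:R.
have A_gt0 : 0 < A by rewrite divr_gt0 ?ltr0n.
have A_neq0 : A != 0 by rewrite gt_eqF.
pose x v := `|f v| / A.
have x_ge0 v : 0 <= x v := divr_ge0 (normr_ge0 _) (ltW A_gt0).
have norm_fE v : `|f v| = A * x v by rewrite /x /= mulrC divfK.
have sum_x : \sum_v x v = #|'I_n|%:R.
  by rewrite /x -mulr_suml card_ord /A invf_div mulrCA mulfV ?mulr1 // gt_eqF.
have bound : \sum_v Num.max (x v) 1 `^ p <= (S + e) * \sum_v x v `^ p.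
  by apply: sum_max1_powR_le x_ge0 sum_x; rewrite ?card_ord.
have -> : \sum_v `|maxop (complete_rel n) f v| `^ p =
    A `^ p * \sum_v Num.max (x v) 1 `^ p.
  rewrite mulr_sumr; apply: eq_bigr => v _.
  rewrite maxop_complete ger0_norm; last by rewrite le_max normr_ge0.
  rewrite -/A norm_fE -[A in Num.max _ A]mulr1 -maxr_pMr ?ltW //.
  by rewrite powRM // ?(ltW A_gt0) // le_max ler01 orbT.
have -> : \sum_v `|f v| `^ p = A `^ p * \sum_v x v `^ p.
  rewrite mulr_sumr; apply: eq_bigr => v _.
  by rewrite norm_fE powRM // ?(ltW A_gt0).
by rewrite mulrCA ler_wpM2l ?powR_ge0.
Qed.

Definition two_level (k : nat) (m b : R) (v : 'I_n) : R := if (v < k)%N then m else b.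

Lemma sum_two_level k (m b : R) : (k <= n)%N ->
  \sum_v two_level k m b v = k%:R * m + (n - k)%:R * b.
Proof.
move=> k_le; rewrite -(big_mkord xpredT (fun i => if (i < k)%N then m else b)).
rewrite (@big_cat_nat _ _ _ k 0 n _ _ (leq0n k) k_le) /=.
rewrite (@eq_big_nat _ 0 +%R 0 k _ (fun _ => m)); last by move=> i /andP[_ ->].
rewrite (@eq_big_nat _ 0 +%R k n _ (fun _ => b)); last first.
  by move=> i /andP[ki _]; rewrite ltnNge ki.
by rewrite !sumr_const_nat subn0 !mulr_natl.
Qed.

Lemma sum_powR_two_level k (m b p : R) : (k <= n)%N -> 0 < m -> 0 < b ->
  \sum_v `|two_level k m b v| `^ p = k%:R * m `^ p + (n - k)%:R * b `^ p.
Proof.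
move=> k_le m_gt0 b_gt0; rewrite -sum_two_level //; apply: eq_bigr => v _.
by rewrite /two_level; case: ifP => _; rewrite gtr0_norm.
Qed.

Lemma sum_maxop_two_level k (m b p : R) : (1 <= k <= n)%N -> 1 <= m -> 0 < b <= 1 ->
  k%:R * m + (n - k)%:R * b = n%:R ->
  \sum_v `|maxop (complete_rel n) (two_level k m b) v| `^ p = k%:R * m `^ p + (n - k)%:R.
Proof.
move=> /andP[k_ge1 k_le] m_ge1 /andP[b_gt0 b_le1] mass.
have tl_gt0 v : 0 < two_level k m b v by rewrite /two_level; case: ifP => _; lra.
have mean1 : (\sum_u `|two_level k m b u|) / n%:R = 1.
  rewrite (eq_bigr (two_level k m b)) => [|u _]; last by rewrite gtr0_norm.
  by rewrite sum_two_level // mass divff // pnatr_eq0 -lt0n (leq_trans k_ge1 k_le).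
rewrite -[X in _ = _ + X]mulr1 -sum_two_level //; apply: eq_bigr => v _.
rewrite maxop_complete mean1 (gtr0_norm (tl_gt0 v)) ger0_norm ?le_max ?ler01 ?orbT //.
by rewrite /two_level; case: ifP => _; [rewrite max_l | rewrite max_r ?powR1].
Qed.

Lemma exists_maxop_complete_ratio_ge k (a p : R) :
  (1 <= k <= n)%N -> 1 <= a -> 0 < p ->
  exists2 f : 'I_n -> R, f <> (fun _ => 0) &
    extremal_ratio n k a * \sum_v `|f v| `^ p <=
    \sum_v `|maxop (complete_rel n) f v| `^ p.
Proof.
move=> k_range a_ge1 p_gt0; have /andP[k_ge1 k_le] := k_range.
set K : R := k%:R; set D : R := (n - k)%:R.
have K_gt0 : 0 < K by rewrite ltr0n.
have N_eq : n%:R = K + D by rewrite -natrD subnKC.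
set b := a `^ (- p^-1); set m := 1 + D / K * (1 - b).
have a_gt0 : 0 < a by lra.
have b_gt0 : 0 < b by rewrite powR_gt0.
have b_le1 : b <= 1 by rewrite /b -(powRr0 a) ler_powR // oppr_le0 invr_ge0 ltW.
have m_ge1 : 1 <= m by rewrite /m lerDl mulr_ge0 ?subr_ge0 // divr_ge0 ?ler0n // ltW.
have a_bp : a * b `^ p = 1.
  by rewrite /b -powRrM mulNr mulVf ?gt_eqF // powR_inv1 ?ltW // mulfV ?gt_eqF.
have mass : K * m + D * b = n%:R by rewrite N_eq /m; field; rewrite gt_eqF.
exists (two_level k m b).
  move/(congr1 (fun g => g (Ordinal (leq_trans k_ge1 k_le))))/eqP.
  by rewrite /two_level /= k_ge1 gt_eqF //; lra.
rewrite sum_maxop_two_level ?b_gt0 // sum_powR_two_level //; last lra.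
have den_gt0 : 0 < K * m `^ p + D * b `^ p.
  by rewrite ltr_pwDl ?mulr_ge0 ?powR_ge0 ?ler0n // mulr_gt0 // powR_gt0 //; lra.
rewrite -ler_pdivlMr // /extremal_ratio -/K -/D -(level_ratio_mul _ _ _ a_bp).
apply: level_ratio_antitone => //; rewrite ?ler0n ?mulr_gt0 ?powR_gt0 //; try lra.
by rewrite N_eq powR_two_level_le ?ler0n.
Qed.

Lemma extremal_set1 : (0 < n)%N -> extremal_set n (1 : R).
Proof.
move=> n_gt0; exists 2, n; split; rewrite ?ltr1n ?leqnn ?n_gt0 //.
by rewrite extremal_ratio_nn // ltr0Sn.
Qed.

Lemma has_sup_extremal_set : (0 < n)%N -> has_sup (extremal_set n : set R).
Proof.
move=> n_gt0; split; first by exists 1; exact: extremal_set1.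
by exists n%:R => _ [a [k [a_gt1 k_range ->]]]; exact: extremal_ratio_le (ltW a_gt1).
Qed.

Lemma powR_maxop_norm_complete_bounds (p e : R) : (0 < n)%N -> 0 < e <= 1 ->
  4 * n%:R ^+ 2 * sup (extremal_set n) <= p * e ^+ 3 ->
  sup (extremal_set n) <= maxop_norm (complete_rel n) p `^ p <= sup (extremal_set n) + e.
Proof.
move=> n_gt0 e01 p_large; set S := sup _.
have E_sup := has_sup_extremal_set n_gt0.
have S_ge1 : 1 <= S := sup_upper_bound E_sup (extremal_set1 n_gt0).
have ratio_le k a : (1 <= k <= n)%N -> 1 < a -> extremal_ratio n k a <= S.
  by move=> k_range a_gt1; apply: (sup_upper_bound E_sup); exists a, k.
have N_ge1 : 1 <= n%:R :> R by rewrite ler1n.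
have p_gt0 : 0 < p.
  by case/andP: (exponent_large N_ge1 S_ge1 e01 p_large) => pe_ge4 pe_le; lra.
have upper (f : 'I_n -> R) : f <> (fun _ => 0) ->
    \sum_v `|maxop (complete_rel n) f v| `^ p <= (S + e) * \sum_v `|f v| `^ p.
  exact: sum_maxop_complete_le.
apply/andP; split; last exact: powR_maxop_norm_le (Ordinal n_gt0) p_gt0 upper.
apply: ge_sup; first by exists 1; exact: extremal_set1.
move=> _ [a [k [a_gt1 k_range ->]]].
have [f f_neq0 ratio_f] := exists_maxop_complete_ratio_ge k_range (ltW a_gt1) p_gt0.
rewrite -(ler_pM2r (sum_powR_norm_gt0 p f_neq0)).
exact: le_trans ratio_f (ler_maxop_norm_powR (Ordinal n_gt0) p_gt0 upper f_neq0).
Qed.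

End CompleteGraphNorm.

Theorem theorem3p3 (R : realType) (n : nat) (hn : (3 <= n)%N) :
  (@maxop_norm R _ (complete_rel n) p `^ p) @[p --> +oo%R] -->
    (sup [set x : R | exists (alpha : R) (k : nat),
           [/\ 1 < alpha, (1 <= k <= n)%N &
            x = (k%:R * alpha `^ (n%:R / k%:R) + alpha * (n - k)%:R) /
                (k%:R * alpha `^ (n%:R / k%:R) + (n - k)%:R)]] : R).
Proof.
have n_gt0 : (0 < n)%N := ltnW (ltnW hn).
set E := [set x : R | _]; have -> : E = extremal_set n by [].
apply/cvgrPdist_le => eps eps_gt0; set e := Num.min eps 1.
have e01 : 0 < e <= 1 by rewrite lt_min eps_gt0 ltr01 ge_min lexx orbT.
exists (4 * n%:R ^+ 2 * sup (extremal_set n) / e ^+ 3); split; first exact: num_real.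
move=> p /ltW; rewrite ler_pdivrMr ?exprn_gt0 ?(andP e01).1 // => p_large.
have /andP[norm_ge norm_le] := powR_maxop_norm_complete_bounds n_gt0 e01 p_large.
rewrite distrC ger0_norm ?subr_ge0 //.
have : e <= eps by rewrite ge_min lexx.
lra.
Qed.
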